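(* Let $N\in(\mathbb{N}^* )^m$, $I\subseteq\{1,\dots,m\}$, and let $A\subseteq F_I(\Gamma^m)$ be a non-closed monohedral largely continuous precell mod $N$. Then for every integer $n\geq1$ there exist $N'\in(\mathbb{N}^* )^m$ and a partition $(A_i)_{1\leq i\leq n}$ of $A$ into largely continuous precells mod $N'$ such that $\partial A_i=\partial A$ for $1\leq i\leq n$.
   Context: $\mathcal{Z}$ is a $\mathbb{Z}$-group (linearly ordered abelian group with smallest positive element $1$, $|\mathcal{Z}/n\mathcal{Z}|=n$ for all $n\geq1$), $\mathcal{Q}$ its divisible hull, $\Gamma=\mathcal{Z}\cup\{+\infty\}$, $\Omega=\mathcal{Q}\cup\{+\infty\}$, $+\infty$ maximal and absorbing for $+$. Topology on $\Omega$ generated by open intervals and $]a,+\infty]$; product topology on $\Omega^m$; $\overline A$ closure; $A$ closed iff $A=\overline A$; frontier $\partial A$ = closure of $\overline A\setminus A$. $F_K(\Gamma^m)$: points whose non-$+\infty$ coordinates are exactly those in $K$; $F_K(A)=\overline A\cap F_K(\Gamma^m)$, a face when non-empty; $A$ is monohedral if its faces are linearly ordered by $B\leq C$ iff $B\subseteq\overline C$. Socle $\widehat a=(a_1,\dots,a_{m-1})$, $\widehat A$, $\widehat N$. Congruence: $a\equiv b\,[n]$ iff $a-b\in n\mathcal{Z}$, and $a\equiv+\infty\,[n]$ always. For $Y\subseteq F_K(\Gamma^k)$, $g:Y\to\Omega$ is affine if constantly $+\infty$ or $g(y)=\alpha_0+\sum_{i\in K}\alpha_iy_i$ ($\alpha_0\in\mathcal{Q}$,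 $\alpha_i\in\mathbb{Q}$); largely continuous if it extends continuously to $\overline Y$. Largely continuous precells mod $N$: $\Gamma^0$ for $m=0$; for $m\geq1$, $A\subseteq F_I(\Gamma^m)$ such that $\widehat A$ is a largely continuous precell mod $\widehat N$ and for some non-negative largely continuous affine $\mu,\nu:\widehat A\to\Omega$ and integer $0\leq\rho<N_m$, $A=\{a\in F_I(\Gamma^m):\widehat a\in\widehat A,\ \mu(\widehat a)\leq a_m\leq\nu(\widehat a),\ a_m\equiv\rho\,[N_m]\}$. *)

From mathcomp Require Import all_boot all_order all_algebra.
Set Implicit Arguments. Unset Strict Implicit. Unset Printing Implicit Defensive.
Import GRing.Theory.
Local Open Scope ring_scope.

(* The divisible hull Q of a Z-group Z is modelled as a Q-vector space
   (divisible torsion-free abelian group) [Q : lmodType rat], together with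
   a total order compatible with addition, the subgroup Z (predicate [zs]),
   its smallest positive element [one], the axiom |Z/nZ| = n, and the fact
   that every element of Q has a positive multiple in Z. *)
Record zgroup (Q : lmodType rat) := ZGroup {
  zle : Q -> Q -> bool;
  zle_refl : forall x, zle x x;
  zle_anti : forall x y, zle x y -> zle y x -> x = y;
  zle_trans : forall x y z, zle x y -> zle y z -> zle x z;
  zle_total : forall x y, zle x y || zle y x;
  zle_add : forall x y z, zle x y -> zle (x + z) (y + z);
  zs : Q -> Prop;
  zs0 : zs 0;
  zsB : forall x y, zs x -> zs y -> zs (x - y);
  one : Q;
  zs_one : zs one;
  one_pos : zle 0 one /\ one != 0;
  one_min : forall z, zs z -> zle 0 z -> z != 0 -> zle one z;
  (* |Z / nZ| = n : there are n representatives of pairwise distinct classes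
     covering Z *)
  zs_index : forall n : nat, (0 < n)%N ->
    exists f : 'I_n -> Q, (forall i, zs (f i)) /\
      forall z, zs z -> exists! i, exists w, zs w /\ z - f i = w *+ n;
  hull : forall q : Q, exists n : nat, (0 < n)%N /\ zs (q *+ n)
}.

Section Defs.
Variables (Q : lmodType rat) (G : zgroup Q).

(* Omega = Q u {+oo}, with +oo represented by None. *)
Definition Omega := option Q.

Definition ole (x y : Omega) : bool :=
  match x, y with
  | _, None => true
  | None, Some _ => false
  | Some p, Some q => zle G p q
  end.
Definition olt (x y : Omega) : bool := ole x y && (x != y).

Definition fin (x : Omega) : Q := odflt 0 x.

Definition inGam (x : Omega) : Prop :=
  match x with Some q => zs G q | None => True end.
Definition inGamma (m : nat) (a : 'I_m -> Omega) : Prop := forall i, inGam (a i).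

Definition inF (m : nat) (K : {set 'I_m}) (a : 'I_m -> Omega) : Prop :=
  inGamma a /\ forall i, i \in K <-> a i <> None.

(* Basic open sets of Omega: (lo, Some hi) is ]lo, hi[ and (lo, None) is
   ]lo, +oo]  (lo, hi in Omega). *)
Definition inB (U : Omega * option Omega) (y : Omega) : bool :=
  match U with
  | (lo, Some hi) => olt lo y && olt y hi
  | (lo, None) => olt lo y
  end.

Definition inBox (m : nat) (U : 'I_m -> Omega * option Omega) (y : 'I_m -> Omega)
  : Prop := forall i, inB (U i) (y i).

Definition oclosure (m : nat) (A : ('I_m -> Omega) -> Prop) (x : 'I_m -> Omega)
  : Prop := forall U, inBox U x -> exists y, A y /\ inBox U y.

Definition oclosed (m : nat) (A : ('I_m -> Omega) -> Prop) : Prop :=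
  forall x, oclosure A x <-> A x.

Definition ofrontier (m : nat) (A : ('I_m -> Omega) -> Prop) :=
  oclosure (fun x => oclosure A x /\ ~ A x).

Definition face (m : nat) (K : {set 'I_m}) (A : ('I_m -> Omega) -> Prop) :=
  fun a => oclosure A a /\ inF K a.

Definition monohedral (m : nat) (A : ('I_m -> Omega) -> Prop) : Prop :=
  forall K L : {set 'I_m},
    (exists a, face K A a) -> (exists b, face L A b) ->
    (forall a, face K A a -> oclosure (face L A) a) \/
    (forall a, face L A a -> oclosure (face K A) a).

Definition affine_on (k : nat) (Y : ('I_k -> Omega) -> Prop)
    (g : ('I_k -> Omega) -> Omega) : Prop :=
  exists K : {set 'I_k}, (forall y, Y y -> inF K y) /\
    ((forall y, Y y -> g y = None) \/
     exists (a0 : Q) (al : 'I_k -> rat),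
       forall y, Y y -> g y = Some (a0 + \sum_(i in K) al i *: fin (y i))).

Definition continuous_on (k : nat) (S : ('I_k -> Omega) -> Prop)
    (h : ('I_k -> Omega) -> Omega) : Prop :=
  forall x, S x -> forall V, inB V (h x) ->
    exists U, inBox U x /\ forall z, S z -> inBox U z -> inB V (h z).

Definition largely_continuous (k : nat) (Y : ('I_k -> Omega) -> Prop)
    (g : ('I_k -> Omega) -> Omega) : Prop :=
  exists h, (forall y, Y y -> h y = g y) /\ continuous_on (oclosure Y) h.

Definition nonneg_on (k : nat) (Y : ('I_k -> Omega) -> Prop)
    (g : ('I_k -> Omega) -> Omega) : Prop :=
  forall y, Y y -> ole (Some 0) (g y).

Definition congr (a : Omega) (rho n : nat) : Prop :=
  match a with
  | None => True
  | Some q => exists w, zs G w /\ q - one G *+ rho = w *+ n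
  end.

Definition soc (m : nat) (T : Type) (a : 'I_m.+1 -> T) : 'I_m -> T :=
  fun i => a (widen_ord (leqnSn m) i).

Definition soc_set (m : nat) (A : ('I_m.+1 -> Omega) -> Prop) :
    ('I_m -> Omega) -> Prop :=
  fun b => exists a, A a /\ forall i, soc a i = b i.

Fixpoint precell (m : nat) :
    ('I_m -> nat) -> (('I_m -> Omega) -> Prop) -> Prop :=
  match m return ('I_m -> nat) -> (('I_m -> Omega) -> Prop) -> Prop with
  | 0 => fun _ A => forall a, A a <-> inGamma a
  | m'.+1 => fun N A =>
      exists I : {set 'I_m'.+1},
        (forall a, A a -> inF I a) /\
        precell (soc N) (soc_set A) /\
        exists (mu nu : ('I_m' -> Omega) -> Omega) (rho : nat),
          affine_on (soc_set A) mu /\ largely_continuous (soc_set A) mu /\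
          nonneg_on (soc_set A) mu /\
          affine_on (soc_set A) nu /\ largely_continuous (soc_set A) nu /\
          nonneg_on (soc_set A) nu /\
          (rho < N ord_max)%N /\
          forall a, A a <->
            (inF I a /\ soc_set A (soc a) /\
             ole (mu (soc a)) (a ord_max) /\ ole (a ord_max) (nu (soc a)) /\
             congr (a ord_max) rho (N ord_max))
  end.

End Defs.

From Pilot Require Import Defs.
From mathcomp Require Import all_boot all_order all_algebra zify.
From Stdlib Require Import ClassicalEpsilon Classical FunctionalExtensionality PropExtensionality.

(* Pick a point x1 of cl A \ A whose face F_K(A) is maximal and let j be the
   first index of I outside K.  Splitting A according to the class of a_j
   modulo n N_j gives n precells, since every point of A can be moved into
   each finer class without changing its earlier coordinates.  Near a point of
   F_K(A) the coordinate j is +oo while the earlier coordinates are finite, so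
   the upper bound on a_j tends to +oo and every piece accumulates at every
   point of F_K(A).  By monohedrality and maximality all of cl A \ A lies in the
   closure of F_K(A), hence each piece has the frontier of A. *)

Set Implicit Arguments. Unset Strict Implicit. Unset Printing Implicit Defensive.
Import GRing.Theory.
Local Open Scope ring_scope.

Section OrderedGroup.
Context {Q : lmodType rat} {G : zgroup Q}.
Local Notation le := (zle G).
Definition zlt (x y : Q) := le x y && (x != y).
Local Notation lt := zlt.
Local Notation zs := (zs G).
Local Notation one := (Defs.one G).

Lemma le_refl x : le x x. Proof. exact: zle_refl. Qed.
Lemma le_anti x y : le x y -> le y x -> x = y. Proof. exact: zle_anti. Qed.
Lemma le_total x y : le x y || le y x. Proof. exact: zle_total. Qed.
Lemma le_trans y x z : le x y -> le y z -> le x z. Proof. exact: zle_trans. Qed.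
Arguments le_trans y [x z].

Lemma le_addr z x y : le x y -> le (x + z) (y + z). Proof. exact: zle_add. Qed.
Lemma le_addl z x y : le x y -> le (z + x) (z + y).
Proof. by rewrite ![z + _]addrC; apply: le_addr. Qed.
Lemma le_addrE z x y : le (x + z) (y + z) = le x y.
Proof. by apply/idP/idP => [/(le_addr (- z))|]; [rewrite !addrK | apply: le_addr]. Qed.
Lemma le_subE x y : le x y = le 0 (y - x).
Proof. by rewrite -(le_addrE (- x)) subrr. Qed.
Lemma le_add2 a b c d : le a b -> le c d -> le (a + c) (b + d).
Proof. by move=> hab hcd; apply: (le_trans (b + c)); [apply: le_addr | apply: le_addl]. Qed.

Lemma ltNge x y : lt x y = ~~ le y x.
Proof.
rewrite /zlt; case: (boolP (le x y)) => [hxy | /negPf hyx] /=; last first.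
  by have := le_total x y; rewrite hyx /= => ->.
apply/idP/idP => [ne | hny]; first by apply: contra ne => /(le_anti hxy) ->.
by apply: contra hny => /eqP ->; apply: le_refl.
Qed.
Lemma leNgt x y : le x y = ~~ lt y x. Proof. by rewrite ltNge negbK. Qed.
Lemma ltW x y : lt x y -> le x y. Proof. by case/andP. Qed.
Lemma lt_irr x : ~~ lt x x. Proof. by rewrite /zlt eqxx andbF. Qed.
Lemma le_lt_trans y x z : le x y -> lt y z -> lt x z.
Proof. by rewrite !ltNge => hxy; apply: contra => hzx; apply: le_trans hzx hxy. Qed.
Arguments le_lt_trans y [x z].
Lemma lt_le_trans y x z : lt x y -> le y z -> lt x z.
Proof. by rewrite !ltNge => hxy hyz; apply: contra hxy; apply: le_trans. Qed.
Arguments lt_le_trans y [x z].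

Lemma lt_addrE z x y : lt (x + z) (y + z) = lt x y. Proof. by rewrite !ltNge le_addrE. Qed.
Lemma lt_addl z x y : lt x y -> lt (z + x) (z + y).
Proof. by rewrite ![z + _]addrC lt_addrE. Qed.
Lemma lt_subE x y : lt x y = lt 0 (y - x). Proof. by rewrite -(lt_addrE (- x)) subrr. Qed.
Lemma lt_le_add a b c d : lt a b -> le c d -> lt (a + c) (b + d).
Proof. by move=> hab hcd; apply: (lt_le_trans (b + c)); [rewrite lt_addrE | apply: le_addl]. Qed.
Lemma lt_oppE x y : lt (- x) (- y) = lt y x.
Proof. by rewrite lt_subE [lt y x]lt_subE opprK addrC. Qed.
Lemma lt_sub a b c d : lt a b -> lt c d -> lt (a - d) (b - c).
Proof. by move=> hab hcd; apply: lt_le_add => //; apply: ltW; rewrite lt_oppE. Qed.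

Lemma le0_muln x n : le 0 x -> le 0 (x *+ n).
Proof.
move=> hx; elim: n => [|n ih]; first by rewrite mulr0n le_refl.
by rewrite mulrS -(addr0 0); apply: le_add2.
Qed.
Lemma le_muln x y n : le x y -> le (x *+ n) (y *+ n).
Proof. by rewrite le_subE [le (x *+ n) _]le_subE -mulrnBl; apply: le0_muln. Qed.
Lemma lt0_muln x n : lt 0 x -> (0 < n)%N -> lt 0 (x *+ n).
Proof.
move=> hx; case: n => // n _; rewrite mulrS -(addr0 0).
by apply: lt_le_add => //; apply/le0_muln/ltW.
Qed.
Lemma lt_muln x y n : lt x y -> (0 < n)%N -> lt (x *+ n) (y *+ n).
Proof. by rewrite lt_subE [lt (x *+ n) _]lt_subE -mulrnBl; apply: lt0_muln. Qed.
Lemma le_mulnE x y n : (0 < n)%N -> le (x *+ n) (y *+ n) = le x y.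
Proof.
move=> n0; apply/idP/idP; last exact: le_muln.
by rewrite !leNgt; apply: contra => /lt_muln; apply.
Qed.
Lemma lt_mulnE x y n : (0 < n)%N -> lt (x *+ n) (y *+ n) = lt x y.
Proof. by move=> n0; rewrite !ltNge le_mulnE. Qed.
Lemma mulrIn_pos (x y : Q) n : (0 < n)%N -> x *+ n = y *+ n -> x = y.
Proof. by move=> n0 e; apply: le_anti; rewrite -(le_mulnE _ _ n0) e le_refl. Qed.
Lemma lt_nmul x a b : lt 0 x -> (a < b)%N -> lt (x *+ a) (x *+ b).
Proof.
move=> x0 ab; rewrite -(subnKC (ltnW ab)) mulrnDr -{1}(addr0 (x *+ a)).
by apply/lt_addl/lt0_muln; rewrite // subn_gt0.
Qed.
Lemma le_nmul x a b : le 0 x -> (a <= b)%N -> le (x *+ a) (x *+ b).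
Proof.
move=> x0 ab; rewrite -(subnKC ab) mulrnDr -{1}(addr0 (x *+ a)).
by apply/le_addl/le0_muln.
Qed.

Lemma one_gt0 : lt 0 one.
Proof. by case: (Defs.one_pos G) => h1 h2; rewrite /zlt h1 eq_sym h2. Qed.

Lemma zsN x : zs x -> zs (- x).
Proof. by move=> hx; rewrite -sub0r; apply: zsB => //; apply: zs0. Qed.
Lemma zsD x y : zs x -> zs y -> zs (x + y).
Proof. by move=> hx hy; rewrite -(opprK y); apply/zsB/zsN. Qed.
Lemma zs_muln x n : zs x -> zs (x *+ n).
Proof.
by move=> hx; elim: n => [|n ih]; [rewrite mulr0n; apply: zs0 | rewrite mulrS; apply: zsD].
Qed.
Lemma zs_onen n : zs (one *+ n). Proof. exact/zs_muln/zs_one. Qed.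
Lemma zs_mulz x (k : int) : zs x -> zs (x *~ k).
Proof. by move=> hx; case: k => n /=; [apply: zs_muln | apply/zsN/zs_muln]. Qed.

Lemma zs_ge1 z : zs z -> lt 0 z -> le one z.
Proof. by move=> hz /andP[h1 h2]; apply: one_min; rewrite // eq_sym. Qed.

Lemma zs_small d : zs d -> le 0 d -> lt d one -> d = 0.
Proof.
move=> hd d0 d1; apply/eqP; apply: contraTT d1 => nd.
by rewrite ltNge zs_ge1 // /zlt d0 eq_sym.
Qed.

Lemma zs_near a b : zs a -> zs b -> lt (a - b) one -> lt (b - a) one -> a = b.
Proof.
move=> ha hb hab hba; apply/eqP; rewrite -subr_eq0; apply/eqP.
case/orP: (le_total 0 (a - b)) => [hab0 | hle]; first exact: zs_small (zsB ha hb) hab0 hab.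
have hba0 : le 0 (b - a) by rewrite le_subE sub0r opprB in hle.
by rewrite -opprB (zs_small (zsB hb ha) hba0 hba) oppr0.
Qed.

Definition zcongr (a b : Q) (n : nat) := exists w, zs w /\ a - b = w *+ n.

Lemma zcongr_sym a b n : zcongr a b n -> zcongr b a n.
Proof. by case=> w [hw e]; exists (- w); rewrite mulNrn -e opprB; split => //; apply: zsN. Qed.
Lemma zcongr_trans b a c n : zcongr a b n -> zcongr b c n -> zcongr a c n.
Proof.
case=> w [hw e] [w' [hw' e']]; exists (w + w'); split; first exact: zsD.
by rewrite mulrnDl -e -e' addrA subrK.
Qed.
Arguments zcongr_trans b [a c n].
Lemma zcongr_dvd a b n k : zcongr a b (n * k) -> zcongr a b n.
Proof.
by case=> w [hw e]; exists (w *+ k); rewrite e mulnC mulrnA; split => //; apply: zs_muln.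
Qed.

Lemma zcongr_nat_inj n i i' : (i < n)%N -> (i' < n)%N ->
  zcongr (one *+ i) (one *+ i') n -> i = i'.
Proof.
wlog le_ii : i i' / (i' <= i)%N.
  move=> hw hi hi' hd; case: (leqP i' i) => h; first exact: hw.
  by apply/esym/hw => //; [apply: ltnW | apply: zcongr_sym].
move=> hi hi' [w [hw e]]; rewrite -mulrnBr // in e.
case: (boolP (w == 0)) => [/eqP w0 | wn0].
  apply/eqP; rewrite eqn_leq le_ii andbT -subn_eq0; apply/eqP.
  move: e; rewrite w0 mul0rn; case: (i - i')%N => // k e.
  by move: (lt0_muln (n := k.+1) one_gt0 isT); rewrite e (negPf (lt_irr _)).
case/orP: (le_total 0 w) => hw0.
  have : lt (one *+ (i - i')) (one *+ n).
    by apply: lt_nmul; [exact: one_gt0 | exact: leq_ltn_trans (leq_subr _ _) hi].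
  by rewrite e ltNge le_muln // one_min.
have : lt (w *+ n) 0.
  rewrite -(mul0rn _ n); apply: lt_muln; first by rewrite /zlt hw0 wn0.
  exact: leq_ltn_trans hi.
by rewrite -e ltNge le0_muln // ltW // one_gt0.
Qed.

Lemma zcongr_nat_rep n z : (0 < n)%N -> zs z ->
  exists i, (i < n)%N /\ zcongr z (one *+ i) n.
Proof.
move=> n0 hz; have [f [hf hu]] := zs_index G n0.
have cls q : zs q -> {i : 'I_n | exists w, zs w /\ q - f i = w *+ n}.
  by move=> hq; apply: constructive_indefinite_description; have [i [h _]] := hu q hq; exists i.
pose g (i : 'I_n) : 'I_n := sval (cls _ (zs_onen i)).
have ginj : injective g.
  move=> i i'; rewrite /g; case: (cls _ _) => k hk; case: (cls _ _) => k' hk' /= ek.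
  subst k'; apply/val_inj/(zcongr_nat_inj (ltn_ord i) (ltn_ord i')).
  by apply: (zcongr_trans (f k)); [exact: hk | exact: zcongr_sym].
have [gi gK Kg] := injF_bij ginj.
have [k hk] := cls z hz.
exists (gi k); split; first exact: ltn_ord.
apply: (zcongr_trans (f k)); first exact: hk.
by have := svalP (cls _ (zs_onen (gi k))); rewrite -/(g _) Kg => /zcongr_sym.
Qed.

Lemma floorZ q : exists w, zs w /\ le w q /\ lt q (w + one).
Proof.
have [n [n0 hn]] := hull G q.
have [i [hi [w [hw e]]]] := zcongr_nat_rep n0 hn.
have e2 : (q - w) *+ n = one *+ i by rewrite mulrnBl; apply/eqP; rewrite subr_eq addrC -subr_eq e.
exists w; split => //; split.
  by rewrite le_subE -(le_mulnE _ _ n0) mul0rn e2 le0_muln // ltW // one_gt0.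
by rewrite -(lt_addrE (- w)) addrAC subrr add0r -(lt_mulnE _ _ n0) e2 lt_nmul // one_gt0.
Qed.

Lemma zcongr_window q r M : (r < M)%N ->
  exists z, zs z /\ lt q z /\ le z (q + one *+ M) /\ zcongr z (one *+ r) M.
Proof.
move=> rM; have M0 : (0 < M)%N by apply: leq_ltn_trans rM.
have [w [hw [h1 h2]]] := floorZ q.
have hw1 : zs (w + one) by apply/zsD/zs_one.
have [s [sM [v [hv ev]]]] := zcongr_nat_rep M0 hw1.
pose t := if (s <= r)%N then (r - s)%N else (r + M - s)%N.
exists (w + one + one *+ t); split; first exact/zsD/zs_onen.
split; first by rewrite -(addr0 q) lt_le_add // le0_muln // ltW // one_gt0.
split.
  rewrite -addrA -mulrS; apply: le_add2 => //; apply: le_nmul; first exact/ltW/one_gt0.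
  by rewrite /t; case: ifP; lia.
rewrite /t; case: ifP => sr.
  exists v; split => //; rewrite -ev -[in one *+ r](subnKC sr) mulrnDr.
  by rewrite opprD addrACA subrr addr0.
exists (v + one); split; first exact/zsD/zs_one.
rewrite mulrnDl -ev.
have -> : one *+ (r + M - s) = one *+ r + one *+ M - one *+ s by rewrite -mulrnDr -mulrnBr //; lia.
by rewrite addrAC !addrA subrK addrAC.
Qed.
Lemma zcongr_refine p r d n : (0 < n)%N -> zcongr p (one *+ r) d ->
  exists2 k, (k < n)%N & zcongr p (one *+ (r + k * d)) (n * d).
Proof.
move=> n0 [w [hw ew]]; have [k [kn [v [hv ev]]]] := zcongr_nat_rep n0 hw.
exists k => //; exists v; split => //.
by rewrite mulrnDr opprD addrA ew !mulrnA -mulrnBl ev.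
Qed.

End OrderedGroup.

Arguments le_trans {Q G} y [x z].
Arguments le_lt_trans {Q G} y [x z].
Arguments lt_le_trans {Q G} y [x z].
Arguments zcongr_trans {Q G} b [a c n].

Definition ext T m (U : 'I_m -> T) (v : T) (i : 'I_m.+1) : T :=
  if (insub (val i) : option 'I_m) is Some j then U j else v.

Lemma ext_widen T m (U : 'I_m -> T) v j : ext U v (widen_ord (leqnSn m) j) = U j.
Proof. by rewrite /ext /= valK. Qed.
Lemma ext_max T m (U : 'I_m -> T) v : ext U v ord_max = v.
Proof. by rewrite /ext insubF //= ltnn. Qed.
Lemma soc_ext T m (U : 'I_m -> T) v : soc (ext U v) = U.
Proof. by apply: functional_extensionality => j; rewrite /soc ext_widen. Qed.

Lemma widen_or_max m (i : 'I_m.+1) :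
  (exists j, i = widen_ord (leqnSn m) j) \/ i = ord_max.
Proof.
case: (ltnP i m) => h; first by left; exists (Ordinal h); apply: val_inj.
by right; apply: val_inj => /=; have := ltn_ord i; lia.
Qed.
Lemma widen_lt m (i : 'I_m.+1) : (i < m)%N -> exists j, i = widen_ord (leqnSn m) j.
Proof. by move=> h; exists (Ordinal h); apply: val_inj. Qed.
Lemma max_neq_widen m (j : 'I_m) : (ord_max == widen_ord (leqnSn m) j) = false.
Proof. by apply/negbTE/eqP => /(congr1 val) /= e; move: (ltn_ord j); rewrite -e ltnn. Qed.

Lemma pset_ext T (P P' : T -> Prop) : (forall x, P x <-> P' x) -> P = P'.
Proof. by move=> h; apply: functional_extensionality => x; apply: propositional_extensionality. Qed.

Section Topology.
Context {Q : lmodType rat} {G : zgroup Q}.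
Local Notation le := (zle G).
Local Notation lt := (@zlt _ G).
Local Notation zs := (zs G).
Local Notation one := (Defs.one G).
Local Notation ole := (ole G).
Local Notation olt := (olt G).
Local Notation inB := (inB G).
Local Notation inBox := (inBox G).
Local Notation cl := (oclosure G).

Lemma olt_def x y : olt x y = ~~ ole y x.
Proof. by rewrite /olt; case: x => [p|]; case: y => [q|] //=; rewrite -ltNge. Qed.
Lemma ole_trans y x z : ole x y -> ole y z -> ole x z.
Proof. by case: x => [p|]; case: y => [q|]; case: z => [r|] //=; apply: le_trans. Qed.
Lemma ole_total x y : ole x y || ole y x.
Proof. by case: x => [p|]; case: y => [q|] //=; apply: le_total. Qed.
Lemma olt_le_trans y x z : olt x y -> ole y z -> olt x z.
Proof. by rewrite !olt_def => hxy hyz; apply: contra hxy; apply: ole_trans. Qed.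
Lemma ole_lt_trans y x z : ole x y -> olt y z -> olt x z.
Proof. by rewrite !olt_def => hxy; apply: contra => /ole_trans; apply. Qed.
Lemma oltW x y : olt x y -> ole x y. Proof. by case/andP. Qed.
Lemma olt_SS p q : olt (Some p) (Some q) = lt p q. Proof. by rewrite olt_def /= ltNge. Qed.
Lemma olt_Nx x : olt None x = false. Proof. by case: x. Qed.

Lemma inB_None (U : Omega Q * option (Omega Q)) :
  inB U None -> exists l, U = (Some l, None).
Proof. by case: U => [[l|] [h|]] //=; rewrite ?olt_Nx ?andbF //; exists l. Qed.

Definition omax (x y : Omega Q) := if ole x y then y else x.
Definition omin (x y : Omega Q) := if ole x y then x else y.
Definition hmin (a b : option (Omega Q)) :=
  match a, b with
  | None, _ => b
  | _, None => a
  | Some x, Some y => Some (omin x y)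
  end.
Definition bmeet (U V : Omega Q * option (Omega Q)) := (omax U.1 V.1, hmin U.2 V.2).
Definition boxmeet m (U V : 'I_m -> Omega Q * option (Omega Q)) i := bmeet (U i) (V i).

Lemma olt_max x y z : olt (omax x y) z = olt x z && olt y z.
Proof.
rewrite /omax; case: ifP => h; apply/idP/idP => [h2|/andP[] //].
  by rewrite h2 andbT; apply: ole_lt_trans h h2.
have h' : ole y x by move: (ole_total x y); rewrite h.
by rewrite h2 (ole_lt_trans h' h2).
Qed.
Lemma olt_min x y z : olt z (omin x y) = olt z x && olt z y.
Proof.
rewrite /omin; case: ifP => h; apply/idP/idP => [h2|/andP[] //].
  by rewrite h2 (olt_le_trans h2 h).
have h' : ole y x by move: (ole_total x y); rewrite h.
by rewrite h2 (olt_le_trans h2 h').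
Qed.
Lemma inB_meet U V y : inB (bmeet U V) y = inB U y && inB V y.
Proof.
by case: U => [l1 [h1|]]; case: V => [l2 [h2|]] /=;
  rewrite olt_max ?olt_min -!andbA; do ?bool_congr.
Qed.
Lemma inBox_meet m (U V : 'I_m -> _) y :
  inBox (boxmeet U V) y <-> inBox U y /\ inBox V y.
Proof.
split=> [h | [h1 h2] i]; last by rewrite /boxmeet inB_meet h1 h2.
by split=> i; have := h i; rewrite /boxmeet inB_meet => /andP[].
Qed.

Lemma box_split m (U : 'I_m.+1 -> Omega Q * option (Omega Q)) y :
  inBox (soc U) (soc y) -> inB (U ord_max) (y ord_max) -> inBox U y.
Proof. by move=> h1 h2 i; case: (widen_or_max i) => [[i' ->]|->] //; apply: h1. Qed.
Lemma ext_inBox m (U : 'I_m -> _) V x :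
  inBox U (soc x) -> inB V (x ord_max) -> inBox (ext U V) x.
Proof.
by move=> h1 h2 i; case: (widen_or_max i) => [[i' ->]|->]; rewrite ?ext_widen ?ext_max.
Qed.

Definition unit_ball (x : Omega Q) : Omega Q * option (Omega Q) :=
  if x is Some q then (Some (q - one), Some (Some (q + one))) else (Some 0, None).
Definition unit_box m (x : 'I_m -> Omega Q) i := unit_ball (x i).

Lemma unit_ball_in x : inB (unit_ball x) x.
Proof.
case: x => [q|] //=; rewrite !olt_SS; apply/andP; split.
  by rewrite lt_subE opprB addrC subrK one_gt0.
by rewrite lt_subE addrAC subrr add0r one_gt0.
Qed.
Lemma unit_box_in m (x : 'I_m -> Omega Q) : inBox (unit_box x) x.
Proof. by move=> i; apply: unit_ball_in. Qed.

Lemma unit_ball_gamma q z : zs q -> inB (unit_ball (Some q)) z -> inGam G z -> z = Some q.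
Proof.
case: z => [p|] //=; rewrite !olt_SS => hq /andP[h1 h2] hp; congr Some.
apply: zs_near hp hq _ _; first by rewrite -(lt_addrE q) subrK addrC.
by move: h1; rewrite lt_subE [zlt (q - p) _]lt_subE !opprB addrCA.
Qed.
Lemma unit_box_inF m (K : {set 'I_m}) x y :
  inF G K x -> inF G K y -> inBox (unit_box x) y -> y = x.
Proof.
move=> [hg hI] [hgy hIy] hU; apply: functional_extensionality => i.
case e: (x i) => [q|].
  by apply: unit_ball_gamma; rewrite -?e ?(hU i) //; move: (hg i); rewrite e.
by case e2: (y i) => [p|] //; have /hI : i \in K by apply/hIy; rewrite e2.
Qed.

Lemma subset_oclosure m (A : ('I_m -> Omega Q) -> Prop) x : A x -> cl A x.
Proof. by move=> h U hU; exists x. Qed.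
Lemma oclosure_mono m (A B : ('I_m -> Omega Q) -> Prop) :
  (forall x, A x -> B x) -> forall x, cl A x -> cl B x.
Proof. by move=> h x hx U /hx [y [/h hy hU]]; exists y. Qed.
Lemma oclosure_idem m (A : ('I_m -> Omega Q) -> Prop) x : cl (cl A) x -> cl A x.
Proof. by move=> h U /h [y [hy /hy]]. Qed.

Definition patt m (x : 'I_m -> Omega Q) : {set 'I_m} := [set i | x i != None].

Section ClosureInF.
Variables (m : nat) (I : {set 'I_m}) (A : ('I_m -> Omega Q) -> Prop).
Hypothesis hA : forall a, A a -> inF G I a.

Lemma oclosure_gamma x : cl A x -> inGamma G x.
Proof.
move=> hx i; case e: (x i) => [q|] //=.
have [w [hw [h1 h2]]] := floorZ (G := G) q.
case: (boolP (q == w)) => [/eqP -> // | ne].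
pose U j := if j == i then (Some w, Some (Some (w + one))) else unit_ball (x j).
have hU : inBox U x.
  move=> j; rewrite /U; case: eqP => [->|_]; last exact: unit_ball_in.
  by rewrite e /= !olt_SS h2 andbT /zlt h1 eq_sym.
have [y [/hA [hg _] /(_ i)]] := hx U hU; rewrite /U eqxx /=.
move: (hg i); case: (y i) => [p|] //= hp; rewrite !olt_SS => /andP[l1 l2].
have : le one (p - w) by apply: zs_ge1; [exact: zsB | rewrite -lt_subE].
by rewrite leNgt -(lt_addrE w) subrK addrC l2.
Qed.

Lemma oclosure_patt x : cl A x -> inF G (patt x) x /\ patt x \subset I.
Proof.
move=> hx; split; first by split=> [|i]; [exact: oclosure_gamma | rewrite inE; split => /eqP].
apply/subsetP => i; rewrite inE; case e: (x i) => [q|] // _.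
have [y [/hA [_ hyI] /(_ i)]] := hx _ (unit_box_in x); rewrite /unit_box e.
by case: (y i) (hyI i) => [p|] [_ hp] //= _; apply: hp.
Qed.

(* Points of F_I are isolated in Gamma^m. *)
Lemma oclosure_inF x : inF G I x -> cl A x -> A x.
Proof. by move=> hx /(_ _ (unit_box_in x)) [y [hy /(unit_box_inF hx (hA hy)) <-]]. Qed.

End ClosureInF.

Lemma oclosure_soc m (A : ('I_m.+1 -> Omega Q) -> Prop) x :
  cl A x -> cl (soc_set A) (soc x).
Proof.
move=> hx U hU.
have [y [hy hUy]] := hx _ (ext_inBox hU (unit_ball_in (x ord_max))).
exists (soc y); split; first by exists y.
by move=> j; have := hUy (widen_ord (leqnSn m) j); rewrite ext_widen.
Qed.

Lemma soc_setP m (A : ('I_m.+1 -> Omega Q) -> Prop) b :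
  soc_set A b -> exists a, A a /\ soc a = b.
Proof. by case=> a [ha e]; exists a; split => //; apply: functional_extensionality. Qed.

Lemma inF_uniq m (I J : {set 'I_m}) a : inF G I a -> inF G J a -> I = J.
Proof.
by move=> [_ hI] [_ hJ]; apply/setP => i; apply/idP/idP => [/hI /hJ | /hJ /hI].
Qed.

Lemma inF_Some m (I : {set 'I_m}) a i : inF G I a -> i \in I -> exists2 p, a i = Some p & zs p.
Proof.
by case=> hg hI /(proj1 (hI i)); case: (a i) (hg i) => [p hp _ | _ []] //; exists p.
Qed.

Definition socI m (I : {set 'I_m.+1}) : {set 'I_m} := [set i | widen_ord (leqnSn m) i \in I].

Lemma inF_soc m (I : {set 'I_m.+1}) a : inF G I a -> inF G (socI I) (soc a).
Proof. by case=> hg hI; split => i; [exact: hg | rewrite inE; exact: hI]. Qed.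

Lemma inF_ext m (I : {set 'I_m.+1}) a z :
  inF G I a -> a ord_max <> None -> zs z -> inF G I (ext (soc a) (Some z)).
Proof.
case=> hg hI hm hz; split => i; case: (widen_or_max i) => [[i' ->]|->];
  rewrite ?ext_widen ?ext_max //; first exact: hg.
by split => // _; apply: (proj2 (hI _) hm).
Qed.

End Topology.

Lemma rat_common_denom (s : seq rat) : exists d : nat, (0 < d)%N /\
  forall x, x \in s -> exists z : int, x * d%:R = z%:~R.
Proof.
elim: s => [|x s [d [d0 hd]]]; first by exists 1%N.
have [dd edd] := denqP x.
exists (d * dd.+1)%N; split; first by rewrite muln_gt0 d0.
move=> y; rewrite inE => /orP[/eqP -> | ys].
  exists (numq x * d%:Z); rewrite natrM mulrC -mulrA (mulrC _ x).
  have -> : x * dd.+1%:R = (numq x)%:~R by rewrite numqE edd.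
  by rewrite mulrC intrM.
by have [z ez] := hd y ys; exists (z * dd.+1%:Z); rewrite natrM mulrA ez intrM.
Qed.

Section Affine.
Context {Q : lmodType rat} {G : zgroup Q}.
Local Notation lt := (@zlt _ G).
Local Notation zs := (zs G).
Local Notation one := (Defs.one G).
Local Notation olt := (olt G).
Local Notation inB := (inB G).
Local Notation inBox := (inBox G).
Local Notation cl := (oclosure G).

Variables (k : nat) (Y : ('I_k -> Omega Q) -> Prop) (g : ('I_k -> Omega Q) -> Omega Q).

Lemma affine_on_sub (Y' : ('I_k -> Omega Q) -> Prop) :
  (forall y, Y' y -> Y y) -> affine_on G Y g -> affine_on G Y' g.
Proof.
move=> s [K [hK hg]]; exists K; split=> [y /s | ]; first exact: hK.
by case: hg => [h | [a0 [al h]]]; [left | right; exists a0, al] => y /s; apply: h.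
Qed.

Lemma largely_continuous_sub (Y' : ('I_k -> Omega Q) -> Prop) :
  (forall y, Y' y -> Y y) -> largely_continuous G Y g -> largely_continuous G Y' g.
Proof.
move=> s [h [e c]]; exists h; split=> [y /s|x hx V hV]; first exact: e.
have [U [hU hz]] := c x (oclosure_mono s hx) V hV.
by exists U; split => // z /(oclosure_mono s) hz'; apply: hz.
Qed.

Lemma nonneg_on_sub (Y' : ('I_k -> Omega Q) -> Prop) :
  (forall y, Y' y -> Y y) -> nonneg_on G Y g -> nonneg_on G Y' g.
Proof. by move=> s h y /s; apply: h. Qed.

Lemma affine_None y0 : affine_on G Y g -> Y y0 -> g y0 = None ->
  forall y, Y y -> g y = None.
Proof. by case=> K [_ [h | [a0 [al h]]]] /h -> //. Qed.

(* [d] is a common denominator of the coefficients. *)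
Lemma affine_values_grid : affine_on G Y g -> exists d : nat, (0 < d)%N /\
  forall z w u v, Y z -> Y w -> g z = Some u -> g w = Some v -> zs ((u - v) *+ d).
Proof.
case=> K [hK [hN | [a0 [al hf]]]].
  by exists 1%N; split => // z w u v /hN ->.
have [d [d0 hd]] := rat_common_denom [seq al i | i <- enum 'I_k].
exists d; split => // z w u v hz hw; rewrite (hf z hz) (hf w hw) => -[<-] [<-].
rewrite opprD addrACA subrr add0r -sumrB -scaler_nat scaler_sumr.
apply: (big_ind zs); [exact: zs0 | exact: zsD | move=> i _].
have [n en] : exists n : int, al i * d%:R = n%:~R.
  by apply: hd; apply/mapP; exists i; rewrite ?mem_enum.
rewrite -scalerBr scalerA mulrC en scaler_int; apply: zs_mulz.
have [[gz _] [gw _]] := (hK z hz, hK w hw).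
by apply: zsB; [move: (gz i) | move: (gw i)]; case: (_ i) => //= _; apply: zs0.
Qed.

(* Finite values lie on a grid of mesh [1/d], so continuity with modulus
   [1/(2d)] forces equality; near [+oo] continuity gives large values. *)
Lemma affine_locally_const x (e : Q) :
  affine_on G Y g -> largely_continuous G Y g -> cl Y x ->
  exists U, inBox U x /\ forall z w, Y z -> Y w -> inBox U z -> inBox U w ->
    g z = g w \/ (olt (Some e) (g z) /\ olt (Some e) (g w)).
Proof.
move=> ga [h [eh ch]] hx.
case e1: (h x) => [q|]; last first.
  have hV : inB (Some e, None) (h x) by rewrite e1.
  have [U [hU hc]] := ch x hx _ hV.
  exists U; split => // z w hz hw hUz hUw; right.
  by rewrite -(eh z hz) -(eh w hw); split; apply: hc => //; apply: subset_oclosure.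
have [d [d0 hgrid]] := affine_values_grid ga.
pose r := ((2 * d)%:R^-1 : rat) *: one.
have r2 : (r + r) *+ d = one.
  rewrite -mulr2n -mulrnA -scaler_nat scalerA mulfV ?scale1r //.
  by rewrite Num.Theory.pnatr_eq0 -lt0n muln_gt0.
have r0 : lt 0 r.
  rewrite ltNge; apply/negP => /(le_muln (2 * d)); rewrite mul0rn mulrnA mulr2n r2.
  by rewrite leNgt one_gt0.
pose V := (Some (q - r), Some (Some (q + r))) : Omega Q * option (Omega Q).
have hV : inB V (h x).
  by rewrite e1 /= !olt_SS lt_subE opprB addrC subrK r0 lt_subE addrAC subrr add0r r0.
have [U [hU hc]] := ch x hx V hV.
exists U; split => // z w hz hw hUz hUw; left.
have := hc z (subset_oclosure hz) hUz; have := hc w (subset_oclosure hw) hUw.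
rewrite (eh z hz) (eh w hw); case ez: (g z) => [u|]; case ew: (g w) => [v|] //=.
rewrite !olt_SS => /andP[w1 w2] /andP[z1 z2]; congr Some.
have eqr : (q + r) - (q - r) = r + r by rewrite opprB addrC addrA subrK.
have D0 : (u - v) *+ d = 0.
  apply: zs_near (hgrid _ _ _ _ hz hw ez ew) (zs0 G) _ _.
    by rewrite subr0 -r2 lt_muln // -eqr lt_sub.
  by rewrite sub0r -mulNrn opprB -r2 lt_muln // -eqr lt_sub.
apply/eqP; rewrite -subr_eq0; apply/eqP; apply: (mulrIn_pos (G := G) d0).
by rewrite D0 mul0rn.
Qed.

End Affine.

Section Precell.
Context {Q : lmodType rat} {G : zgroup Q}.
Local Notation one := (Defs.one G).
Local Notation ole := (ole G).
Local Notation zcongr := (@zcongr _ G).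

Definition bound_fun k (Y : ('I_k -> Omega Q) -> Prop) (g : ('I_k -> Omega Q) -> Omega Q) :=
  [/\ affine_on G Y g, largely_continuous G Y g & nonneg_on G Y g].

Lemma bound_fun_sub k (Y Y' : ('I_k -> Omega Q) -> Prop) g :
  (forall y, Y' y -> Y y) -> bound_fun Y g -> bound_fun Y' g.
Proof.
by move=> s [ga gl gn]; split; [apply: affine_on_sub ga | apply: largely_continuous_sub gl |
  apply: nonneg_on_sub gn].
Qed.

Definition cell_over m (I : {set 'I_m.+1}) (B : ('I_m -> Omega Q) -> Prop)
    (mu nu : ('I_m -> Omega Q) -> Omega Q) (rho n : nat) (a : 'I_m.+1 -> Omega Q) :=
  [/\ inF G I a, B (soc a), ole (mu (soc a)) (a ord_max), ole (a ord_max) (nu (soc a))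
    & congr G (a ord_max) rho n].

Lemma cell_overE m I B mu nu rho n (a : 'I_m.+1 -> Omega Q) :
  cell_over I B mu nu rho n a <->
  inF G I a /\ B (soc a) /\ ole (mu (soc a)) (a ord_max) /\ ole (a ord_max) (nu (soc a)) /\
    congr G (a ord_max) rho n.
Proof. by split=> [[] | [? [? [? [? ?]]]]]. Qed.

Lemma precellS m (N : 'I_m.+1 -> nat) A : precell G N A <->
  exists I mu nu rho, [/\ precell G (soc N) (soc_set A),
    bound_fun (soc_set A) mu, bound_fun (soc_set A) nu, (rho < N ord_max)%N &
    forall a, A a <-> cell_over I (soc_set A) mu nu rho (N ord_max) a].
Proof.
split.
  case=> I [_ [hs [mu [nu [rho [am [lm [nm [an [ln [nn [hr hA]]]]]]]]]]]].
  exists I, mu, nu, rho; split => // a.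
  exact: iff_trans (hA a) (iff_sym (cell_overE _ _ _ _ _ _ _)).
case=> I [mu [nu [rho [hs [am lm nm] [an ln nn] hr hA]]]].
exists I; split; first by move=> a /hA [].
split => //; exists mu, nu, rho.
by do !(split; first by []); move=> a; apply: iff_trans (hA a) (cell_overE _ _ _ _ _ _ _).
Qed.

Lemma precell_congr m (N : 'I_m -> nat) A : precell G N A ->
  forall j a b p q, A a -> A b -> a j = Some p -> b j = Some q -> zcongr p q (N j).
Proof.
elim: m N A => [|m ih] N A; first by move=> _ [].
case/precellS => I [mu [nu [rho [hs _ _ _ hA]]]] j a b p q ha hb.
case: (widen_or_max j) => [[j' ->] | ->] ea eb.
  by apply: (ih _ _ hs j' (soc a) (soc b)) => //; [exists a | exists b].
have [_ _ _ _] := proj1 (hA a) ha; have [_ _ _ _] := proj1 (hA b) hb.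
rewrite ea eb /= => cb ca.
by apply: (zcongr_trans (one *+ rho)) => //; apply: zcongr_sym.
Qed.

Definition restr m (A : ('I_m -> Omega Q) -> Prop) (j : 'I_m) c M :=
  fun a => A a /\ congr G (a j) c M.
Definition upd m (N : 'I_m -> nat) (j : 'I_m) M := fun i => if i == j then M else N i.

Definition class_liftable m (A : ('I_m -> Omega Q) -> Prop) (j : 'I_m) c M :=
  forall a, A a -> exists a', [/\ A a', forall i : 'I_m, (i < j)%N -> a' i = a i
    & congr G (a' j) c M].

Definition class_dense_at m (A : ('I_m -> Omega Q) -> Prop) (j : 'I_m) c M x :=
  forall U, inBox G U x -> exists y, [/\ A y, inBox G U y & congr G (y j) c M].

Section Socle.
Variables (m : nat) (A : ('I_m.+1 -> Omega Q) -> Prop) (c M : nat).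
Local Notation w := (widen_ord (leqnSn m)).

Lemma soc_set_restr j : soc_set (restr A (w j) c M) = restr (soc_set A) j c M.
Proof.
apply: pset_ext => b; split.
  by case=> a [[ha ca] eb]; split; [exists a | rewrite -eb].
by case=> [[a [ha eb]] cb]; exists a; do !split => //; have := eb j; rewrite /soc => ->.
Qed.

Lemma soc_upd (N : 'I_m.+1 -> nat) j : soc (upd N (w j) M) = upd (soc N) j M.
Proof.
apply: functional_extensionality => i; rewrite /soc /upd.
by congr (if _ then _ else _); apply/eqP/eqP => [/(congr1 val) /val_inj | ->].
Qed.

Lemma soc_upd_max (N : 'I_m.+1 -> nat) : soc (upd N ord_max M) = soc N.
Proof. by apply: functional_extensionality => i; rewrite /soc /upd eq_sym max_neq_widen. Qed.

Lemma class_liftable_soc j : class_liftable A (w j) c M -> class_liftable (soc_set A) j c M.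
Proof.
move=> hl b [a [ha eb]]; have [a' [ha' ha'a ca']] := hl a ha.
by exists (soc a'); split => //; [exists a' | move=> i hi; rewrite -eb /soc ha'a].
Qed.

Lemma class_liftable_of_soc j :
  class_liftable (soc_set A) j c M -> class_liftable A (w j) c M.
Proof.
move=> hl a ha; have hsa : soc_set A (soc a) by exists a.
have [b [/soc_setP [a' [ha' eb]] hba cb]] := hl (soc a) hsa.
exists a'; split => //; last by rewrite -eb in cb.
move=> i hi; have [i' ei] := widen_lt (ltn_trans hi (ltn_ord j)); subst i.
by rewrite -[a' _]/(soc a' i') eb hba.
Qed.

Lemma soc_set_restr_max : class_liftable A ord_max c M ->
  soc_set (restr A ord_max c M) = soc_set A.
Proof.
move=> hl; apply: pset_ext => b; split; first by case=> a [[ha _] eb]; exists a.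
case=> a [ha eb]; have [a' [ha' ha'a ca']] := hl a ha.
exists a'; split=> [| i]; first by split.
by rewrite -eb /soc ha'a //= ltn_ord.
Qed.

End Socle.

Lemma precell_restr m (N : 'I_m -> nat) A (j : 'I_m) c M :
  precell G N A -> (N j %| M)%N -> (c < M)%N -> class_liftable A j c M ->
  precell G (upd N j M) (restr A j c M).
Proof.
elim: m N A j => [|m ih] N A j; first by case: j.
case/precellS => I [mu [nu [rho [hs bmu bnu hr hA]]]] dvd cM hl.
apply/precellS; case: (widen_or_max j) => [[j' ej] | ej]; subst j.
  have sub b : restr (soc_set A) j' c M b -> soc_set A b by case.
  have -> : upd N (widen_ord (leqnSn m) j') M ord_max = N ord_max.
    by rewrite /upd max_neq_widen.
  exists I, mu, nu, rho; rewrite soc_set_restr soc_upd; split => //.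
  - exact: ih hs dvd cM (class_liftable_soc hl).
  - exact: bound_fun_sub sub bmu.
  - exact: bound_fun_sub sub bnu.
  move=> a; split.
    by case=> /hA [hF hsa hm hn hc] ca; split.
  by case=> hF [hsa ca] hm hn hc; split => //; apply/hA.
have -> : upd N ord_max M ord_max = M by rewrite /upd eqxx.
exists I, mu, nu, c; rewrite soc_set_restr_max // soc_upd_max; split => // a.
split; first by case=> /hA [hF hsa hm hn _] ca; split.
case=> hF hsa hm hn ca; split => //; apply/hA; split => //.
case ea: (a ord_max) ca => [p|] //= ca.
have [a1 [ha1 ea1]] := soc_setP hsa.
have [a2 [ha2 _ ca2]] := hl a1 ha1.
have [hF2 _ _ _ cr2] := proj1 (hA a2) ha2.
have mI : ord_max \in I by apply/(proj2 hF); rewrite ea.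
case ea2: (a2 ord_max) (proj2 hF2 ord_max) => [p2|] [+ _]; last by move/(_ mI).
move=> _; rewrite ea2 /= in ca2 cr2.
case/dvdnP: dvd => k ek; rewrite ek mulnC in ca ca2.
apply: (zcongr_trans p2) cr2.
apply: (zcongr_trans (one *+ c)); first exact: zcongr_dvd ca.
by apply: zcongr_sym; apply: zcongr_dvd ca2.
Qed.

End Precell.

Section Step.
Context {Q : lmodType rat} {G : zgroup Q}.
Local Notation le := (zle G).
Local Notation lt := (@zlt _ G).
Local Notation zs := (zs G).
Local Notation one := (Defs.one G).
Local Notation ole := (ole G).
Local Notation olt := (olt G).
Local Notation inB := (inB G).
Local Notation inBox := (inBox G).
Local Notation cl := (oclosure G).
Local Notation zcongr := (@zcongr _ G).
Local Notation cell_over := (@cell_over _ G).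
Local Notation bound_fun := (@bound_fun _ G).
Local Notation unit_ball := (@unit_ball _ G).
Local Notation boxmeet := (@boxmeet _ G).
Local Notation unit_box := (@unit_box _ G).
Local Notation class_dense_at := (@class_dense_at _ G).
Local Notation class_liftable := (@class_liftable _ G).

Variables (m : nat) (A : ('I_m.+1 -> Omega Q) -> Prop) (I : {set 'I_m.+1}).
Variables (mu nu : ('I_m -> Omega Q) -> Omega Q) (rho n : nat).
Hypothesis hA : forall a, A a <-> cell_over I (soc_set A) mu nu rho n a.
Hypotheses (bmu : bound_fun (soc_set A) mu) (bnu : bound_fun (soc_set A) nu).

Lemma cell_inF a : A a -> inF G I a. Proof. by case/hA. Qed.

Lemma cell_last a : A a -> ord_max \in I -> exists2 p, a ord_max = Some p & zs p.
Proof. by move=> /cell_inF; apply: inF_Some. Qed.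

Lemma cell_ext a z : A a -> a ord_max <> None -> zs z ->
  ole (mu (soc a)) (Some z) -> ole (Some z) (nu (soc a)) -> congr G (Some z) rho n ->
  A (ext (soc a) (Some z)).
Proof.
move=> ha am hz hm hn hc; apply/hA; split; rewrite ?soc_ext ?ext_max //.
- exact: inF_ext (cell_inF ha) am hz.
- by exists a.
Qed.

(* Near a closure point whose socle is approached by socle points of [A],
   [mu] and [nu] do not move past a finite last coordinate, and [nu]
   tends to [+oo] when the last coordinate is [+oo]. *)
Section Approach.
Variables (P : ('I_m -> Omega Q) -> Prop) (x : 'I_m.+1 -> Omega Q).
Hypothesis hx : cl A x.
Hypothesis hP : forall U, inBox U (soc x) -> exists b, [/\ soc_set A b, inBox U b & P b].

Lemma approach_fin e : x ord_max = Some e ->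
  forall U, inBox U x -> exists y, [/\ A y, inBox U y & P (soc y)].
Proof.
move=> xe U hU; have hxs := oclosure_soc hx.
have he : zs e by move: (oclosure_gamma cell_inF hx ord_max); rewrite xe.
have [[amu lmu _] [anu lnu _]] := (bmu, bnu).
have [U3 [hU3 hc3]] := affine_locally_const e amu lmu hxs.
have [U4 [hU4 hc4]] := affine_locally_const e anu lnu hxs.
have [a [ha hUa]] : exists a, A a /\ inBox (ext (boxmeet U3 U4) (unit_ball (Some e))) a.
  by apply: hx; apply: ext_inBox; [apply/inBox_meet | rewrite xe; apply: unit_ball_in].
have am : a ord_max = Some e.
  by have := hUa ord_max; rewrite ext_max => /unit_ball_gamma; apply => //; case: (cell_inF ha).
have /inBox_meet [sU3 sU4] : inBox (boxmeet U3 U4) (soc a).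
  by move=> i; have := hUa (widen_ord (leqnSn m) i); rewrite ext_widen.
have [b [hb /inBox_meet [hUb /inBox_meet [hUb3 hUb4]] Pb]] :
    exists b, [/\ soc_set A b, inBox (boxmeet (soc U) (boxmeet U3 U4)) b & P b].
  by apply: hP; apply/inBox_meet; split=> [i | ]; [apply: hU | apply/inBox_meet].
have hsa : soc_set A (soc a) by exists a.
have [_ _ ma na ca] := proj1 (hA a) ha; rewrite am in ma na ca.
have [a' [ha' eb]] := soc_setP hb.
have mI : ord_max \in I by apply/((cell_inF ha).2 ord_max); rewrite am.
have [p' ep' _] := cell_last ha' mI.
exists (ext b (Some e)); split.
- rewrite -eb; apply: cell_ext; rewrite ?ep' ?eb //.
    by case: (hc3 b (soc a) hb hsa hUb3 sU3) => [-> // | [_]]; rewrite olt_def ma.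
  by case: (hc4 b (soc a) hb hsa hUb4 sU4) => [-> // | [/oltW]].
- apply: box_split; first by rewrite soc_ext.
  by rewrite ext_max -xe; apply: hU.
- by rewrite soc_ext.
Qed.

Lemma nu_tends_to_oo l : x ord_max = None ->
  exists U, inBox U (soc x) /\ forall b, soc_set A b -> inBox U b -> olt (Some l) (nu b).
Proof.
move=> xm; have [_ [h [eh ch]] _] := bnu; have hxs := oclosure_soc hx.
suff hN : h (soc x) = None.
  have hV : inB (Some l, None) (h (soc x)) by rewrite hN.
  have [U [hU hc]] := ch _ hxs _ hV.
  by exists U; split => // b hb hUb; rewrite -(eh b hb); apply: hc (subset_oclosure hb) hUb.
case e1: (h (soc x)) => [q|] //.
have hV : inB (unit_ball (Some q)) (h (soc x)) by rewrite e1; apply: unit_ball_in.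
have [U1 [hU1 hc1]] := ch _ hxs _ hV.
have [y [hy hUy]] : exists y, A y /\ inBox (ext U1 (Some (q + one), None)) y.
  by apply: hx; apply: ext_inBox; rewrite ?xm.
have sy : soc_set A (soc y) by exists y.
have hUs : inBox U1 (soc y) by move=> i; have := hUy (widen_ord (leqnSn m) i); rewrite ext_widen.
have [_ _ _ nuy _] := proj1 (hA y) hy.
have := hc1 _ (subset_oclosure sy) hUs; rewrite eh // => /andP[_ /oltW nuq].
have := hUy ord_max; rewrite ext_max => /olt_le_trans /(_ (ole_trans nuy nuq)).
by rewrite olt_SS (negPf (lt_irr _)).
Qed.

Lemma approach_inf : x ord_max = None -> ord_max \in I -> (rho < n)%N ->
  forall U, inBox U x -> exists y, [/\ A y, inBox U y & P (soc y)].
Proof.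
move=> xm mI hr U hU; have := hU ord_max; rewrite xm => /inB_None [l eU].
have [U2 [hU2 hnu]] := nu_tends_to_oo (l + one *+ n) xm.
have [b [hb /inBox_meet [hUb hUb2] Pb]] :
    exists b, [/\ soc_set A b, inBox (boxmeet (soc U) U2) b & P b].
  by apply: hP; apply/inBox_meet; split=> // i; apply: hU.
have [a [ha eb]] := soc_setP hb.
have [p ep _] := cell_last ha mI.
have [_ _ ma _ _] := proj1 (hA a) ha; rewrite ep in ma.
case: (boolP (lt l p)) => lp.
  exists a; split; rewrite ?eb //.
  by apply: box_split; rewrite ?eb // eU ep /= olt_SS.
have [z [hz [lz [zl cz]]]] := zcongr_window (G := G) l hr.
exists (ext b (Some z)); split.
- rewrite -eb; apply: cell_ext; rewrite ?ep //.
    by apply: ole_trans ma _; apply: le_trans (ltW lz); rewrite leNgt.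
  by rewrite eb; apply/oltW/(ole_lt_trans _ (hnu b hb hUb2)).
- apply: box_split; first by rewrite soc_ext.
  by rewrite ext_max eU /= olt_SS.
- by rewrite soc_ext.
Qed.

Lemma approach_notin : ord_max \notin I ->
  forall U, inBox U x -> exists y, [/\ A y, inBox U y & P (soc y)].
Proof.
move=> mI U hU.
have xm : x ord_max = None.
  case: (oclosure_patt cell_inF hx) => _ /subsetP /(_ ord_max) sI.
  by apply/eqP; apply: contraNT mI => xm; apply: sI; rewrite inE.
have [b [hb hUb Pb]] := hP (fun i => hU (widen_ord (leqnSn m) i)).
have [a [ha eb]] := soc_setP hb.
have am : a ord_max = None.
  by apply/eqP; apply: contraNT mI => /eqP am; apply/((cell_inF ha).2 ord_max).
exists a; split; rewrite ?eb //.
by apply: box_split; rewrite ?eb // am -xm; apply: hU.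
Qed.

Lemma approach : (rho < n)%N ->
  forall U, inBox U x -> exists y, [/\ A y, inBox U y & P (soc y)].
Proof.
move=> hr; case mI: (ord_max \in I); last by apply: approach_notin; rewrite mI.
by case xm: (x ord_max) => [e|]; [apply: approach_fin xm | apply: approach_inf].
Qed.

End Approach.

(* When the last coordinate is the one to refine, [nu] is identically [+oo]
   and the last coordinate can be raised freely within its class. *)
Section Top.
Variables (x : 'I_m.+1 -> Omega Q) (c M : nat).
Hypotheses (hx : cl A x) (xm : x ord_max = None) (hxs : soc_set A (soc x)).
Hypotheses (dvd : (n %| M)%N) (cM : (c < M)%N) (mI : ord_max \in I).
Hypothesis ha0 : exists a0, A a0 /\ congr G (a0 ord_max) c n.

Lemma nu_None b : soc_set A b -> nu b = None.
Proof.
have [anu _ _] := bnu; apply: (affine_None anu hxs).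
case e: (nu (soc x)) => [q|] //.
have [y [hy hUy]] : exists y, A y /\ inBox (ext (unit_box (soc x)) (Some q, None)) y.
  by apply: hx; apply: ext_inBox; [apply: unit_box_in | rewrite xm].
have sy : soc y = soc x.
  have [a [ha ea]] := soc_setP hxs; rewrite -ea in hUy *.
  apply: (unit_box_inF (inF_soc (cell_inF ha)) (inF_soc (cell_inF hy))) => i.
  by have := hUy (widen_ord (leqnSn m) i); rewrite ext_widen.
have [_ _ _ ny _] := proj1 (hA y) hy.
have := hUy ord_max; rewrite ext_max /= olt_def.
by rewrite sy e in ny; rewrite ny.
Qed.

Lemma raise_last a p z : A a -> a ord_max = Some p -> zs z -> le p z ->
  zcongr z (one *+ c) M -> A (ext (soc a) (Some z)).
Proof.
move=> ha ap hz pz cz; have [_ _ ma _ _] := proj1 (hA a) ha.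
have [a0 [h0 c0]] := ha0; have [p0 e0 _] := cell_last h0 mI.
have [_ _ _ _ r0] := proj1 (hA a0) h0; rewrite e0 /= in c0 r0.
apply: cell_ext => //; [by rewrite ap | by apply: ole_trans ma _; rewrite ap |
  by rewrite nu_None //; exists a | ].
case/dvdnP: dvd cz => k ->; rewrite mulnC => /zcongr_dvd cz.
by apply: (zcongr_trans (one *+ c)) => //; apply: (zcongr_trans p0) r0; apply: zcongr_sym.
Qed.

Lemma class_top : class_dense_at A ord_max c M x /\ class_liftable A ord_max c M.
Proof.
split=> [U hU | a ha].
  have := hU ord_max; rewrite xm => /inB_None [l eU].
  have [a [ha ea]] := soc_setP hxs; have [p ap _] := cell_last ha mI.
  have [q [pq lq]] : exists q, le p q /\ le l q.
    by case/orP: (le_total (G := G) p l) => h; [exists l | exists p]; rewrite le_refl.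
  have [z [hz [qz [_ cz]]]] := zcongr_window (G := G) q cM.
  exists (ext (soc a) (Some z)); split; rewrite ?ext_max //.
    exact: raise_last ha ap hz (le_trans q pq (ltW qz)) cz.
  apply: box_split; first by rewrite soc_ext ea => i; apply: hU.
  by rewrite ext_max eU /= olt_SS (le_lt_trans q lq qz).
have [p ap _] := cell_last ha mI.
have [z [hz [pz [_ cz]]]] := zcongr_window (G := G) p cM.
exists (ext (soc a) (Some z)); split; rewrite ?ext_max //.
  exact: raise_last ha ap hz (ltW pz) cz.
by move=> i /widen_lt [i' ->]; rewrite ext_widen.
Qed.

End Top.
End Step.

Section Density.
Context {Q : lmodType rat} {G : zgroup Q}.
Local Notation cl := (oclosure G).
Local Notation class_dense_at := (@class_dense_at _ G).
Local Notation class_liftable := (@class_liftable _ G).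

Lemma class_dense_liftable m (N : 'I_m -> nat) A (I : {set 'I_m}) (j : 'I_m) c M :
  precell G N A -> (forall a, A a -> inF G I a) -> (N j %| M)%N -> (c < M)%N ->
  (exists a0, A a0 /\ congr G (a0 j) c (N j)) -> j \in I ->
  forall x, cl A x -> x j = None -> (forall i : 'I_m, (i < j)%N -> i \in I -> x i <> None) ->
  class_dense_at A j c M x /\ class_liftable A j c M.
Proof.
elim: m N A I j c M => [|m ih] N A I j c M; first by move=> _ _; case: j.
case/precellS => I' [mu [nu [rho [hs bmu bnu hr hA]]]] hI dvd cM [a0 [ha0 ca0]] jI x hx xj hbelow.
have eI : I' = I := inF_uniq (cell_inF hA ha0) (hI a0 ha0); subst I'.
have hIs b : soc_set A b -> inF G (socI I) b by case/soc_setP => a [/hI /inF_soc ? <-].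
case: (widen_or_max j) => [[j' ej] | ej]; subst j.
  have a0s : exists b, soc_set A b /\ congr G (b j') c (soc N j').
    by exists (soc a0); split => //; exists a0.
  have [D L] := ih (soc N) (soc_set A) (socI I) j' c M hs hIs dvd cM a0s
    ltac:(by rewrite inE) (soc x) (oclosure_soc hx) xj
    (fun i hi hiI => hbelow (widen_ord (leqnSn m) i) hi ltac:(by move: hiI; rewrite inE)).
  split; last exact: class_liftable_of_soc L.
  exact: (approach (P := fun b => congr G (b j') c M) hA bmu bnu hx D hr).
have hxs : soc_set A (soc x).
  apply: (oclosure_inF hIs _ (oclosure_soc hx)); split=> [i | i].
    exact: (oclosure_gamma hI hx).
  rewrite inE; split=> [/(hbelow (widen_ord (leqnSn m) i) (ltn_ord i)) // | xi].
  by have /subsetP := (oclosure_patt hI hx).2; apply; rewrite inE; apply/eqP.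
by apply: (class_top hA bnu hx) => //; exists a0.
Qed.

End Density.

Section Frontier.
Context {Q : lmodType rat} {G : zgroup Q}.
Local Notation cl := (oclosure G).

Lemma nonclosed_point m (A : ('I_m -> Omega Q) -> Prop) :
  ~ oclosed G A -> exists x, cl A x /\ ~ A x.
Proof.
move=> hnc; apply: NNPP => hne; apply: hnc => x; split; last exact: subset_oclosure.
by move=> hx; apply: NNPP => nx; apply: hne; exists x.
Qed.

Lemma max_frontier_point m (A : ('I_m -> Omega Q) -> Prop) : ~ oclosed G A ->
  exists x, [/\ cl A x, ~ A x & forall y, cl A y -> ~ A y -> (#|patt y| <= #|patt x|)%N].
Proof.
move=> /nonclosed_point [x0 [hx0 nx0]].
pose pb K := if excluded_middle_informative (exists y, [/\ cl A y, ~ A y & patt y = K])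
  then true else false.
have pbP K : reflect (exists y, [/\ cl A y, ~ A y & patt y = K]) (pb K).
  by rewrite /pb; case: excluded_middle_informative => h; constructor.
have pb0 : pb (patt x0) by apply/pbP; exists x0.
case: (arg_maxnP (fun K : {set 'I_m} => #|K|) pb0) => K /pbP [x [hx nx <-]] hmax.
by exists x; split => // y hy ny; apply: hmax; apply/pbP; exists y.
Qed.

Lemma first_missing_coord m (I : {set 'I_m}) (A : ('I_m -> Omega Q) -> Prop) x :
  (forall a, A a -> inF G I a) -> cl A x -> ~ A x ->
  exists j, [/\ j \in I, x j = None & forall i : 'I_m, (i < j)%N -> i \in I -> x i <> None].
Proof.
move=> hI hx nx; have [fx sI] := oclosure_patt hI hx.
have [i0 i0D] : exists i0, i0 \in I :\: patt x.
  apply/set0Pn; rewrite setD_eq0; apply: contra_notN nx => sI'.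
  by apply: (oclosure_inF hI _ hx); rewrite -(_ : patt x = I) //; apply/eqP; rewrite eqEsubset sI.
case: (arg_minnP (fun i : 'I_m => val i) i0D) => j /setDP [jI jx] jmin.
exists j; split => //; first by apply/eqP; move: jx; rewrite inE negbK.
move=> i hi iI xi; have : (j <= i)%N by apply: jmin; apply/setDP; rewrite inE xi.
by rewrite leqNgt hi.
Qed.

Lemma ofrontier_eq m (I : {set 'I_m}) (A B : ('I_m -> Omega Q) -> Prop) :
  (forall a, A a -> inF G I a) -> (forall a, B a -> A a) ->
  (forall y, cl A y -> ~ A y -> cl B y) -> forall x, ofrontier G B x <-> ofrontier G A x.
Proof.
move=> hI hBA hAB x.
suff e : (fun y => cl B y /\ ~ B y) = (fun y => cl A y /\ ~ A y) by rewrite /ofrontier e.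
apply: pset_ext => y; split=> [[hy ny] | [hy ny]]; last by split; [exact: hAB | move/hBA].
split=> [|/hI fy]; first exact: (oclosure_mono hBA hy).
by apply: ny; apply: oclosure_inF fy hy => a /hBA /hI.
Qed.

End Frontier.

Section Pieces.
Context {Q : lmodType rat} {G : zgroup Q}.
Local Notation cl := (oclosure G).
Local Notation zcongr := (@zcongr _ G).
Local Notation one := (Defs.one G).
Local Notation restr := (@restr _ G).
Local Notation class_dense_at := (@class_dense_at _ G).
Local Notation class_liftable := (@class_liftable _ G).

Variables (m : nat) (N : 'I_m -> nat) (I : {set 'I_m}) (A : ('I_m -> Omega Q) -> Prop).
Hypotheses (hI : forall a, A a -> inF G I a) (hpre : precell G N A) (hmono : monohedral G A).
Variables (x1 : 'I_m -> Omega Q) (j : 'I_m) (a0 : 'I_m -> Omega Q) (r0 n : nat).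
Hypothesis hx1 : cl A x1.
Hypothesis hmax : forall y, cl A y -> ~ A y -> (#|patt y| <= #|patt x1|)%N.
Hypotheses (jI : j \in I) (xj : x1 j = None).
Hypothesis hbelow : forall i : 'I_m, (i < j)%N -> i \in I -> x1 i <> None.
Hypotheses (ha0 : A a0) (cr0 : congr G (a0 j) r0 (N j)) (hr0 : (r0 < N j)%N) (hn : (0 < n)%N).

Local Notation M := (n * N j)%N.
Local Notation c k := (r0 + k * N j)%N.
Local Notation piece k := (restr A j (c k) M).

Lemma piece_class_lt (k : 'I_n) : (c k < M)%N.
Proof. by have := ltn_ord k; nia. Qed.

Lemma piece_core (k : 'I_n) z : cl A z -> patt z = patt x1 ->
  class_dense_at A j (c k) M z /\ class_liftable A j (c k) M.
Proof.
move=> hz ez; have xnone i : (z i == None) = (x1 i == None).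
  by move/setP/(_ i): ez; rewrite !inE => /negbRL ->; rewrite negbK.
apply: (class_dense_liftable hpre hI _ (piece_class_lt k) _ jI hz).
- by rewrite dvdn_mull.
- exists a0; split => //; case: (a0 j) cr0 => [p|] //= [w [hw e]].
  exists (w - one *+ k); split; first exact/zsB/zs_onen.
  by rewrite mulrnBl -mulrnA -e mulrnDr opprD addrA.
- by apply/eqP; rewrite xnone xj.
- by move=> i hi iI; apply/eqP; rewrite xnone; apply/eqP; apply: hbelow.
Qed.

Lemma piece_liftable (k : 'I_n) : class_liftable A j (c k) M.
Proof. exact: (piece_core k hx1 erefl).2. Qed.

Lemma piece_dense (k : 'I_n) z : cl A z -> patt z = patt x1 -> cl (piece k) z.
Proof.
move=> hz ez U /((piece_core k hz ez).1) [y [hy hUy cy]].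
by exists y; do !split.
Qed.

(* Faces are linearly ordered and [patt x1] is maximal among proper faces,
   so every point of [cl A \ A] lies in the closure of the face of [x1]. *)
Lemma frontier_in_piece (k : 'I_n) y : cl A y -> ~ A y -> cl (piece k) y.
Proof.
move=> hy ny; have [fy _] := oclosure_patt hI hy; have [fx1 _] := oclosure_patt hI hx1.
have face_patt z : cl A z -> inF G (patt x1) z -> patt z = patt x1.
  by move=> hz fz; apply: inF_uniq fz; case: (oclosure_patt hI hz).
case: (hmono (ex_intro _ y (conj hy fy)) (ex_intro _ x1 (conj hx1 fx1))) => h.
  apply: oclosure_idem; apply: oclosure_mono (h y (conj hy fy)) => z [hz fz].
  exact: piece_dense hz (face_patt z hz fz).
have [_ sxy] := oclosure_patt (fun a (ha : face G (patt y) A a) => ha.2) (h x1 (conj hx1 fx1)).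
have hle : (#|patt y| <= #|patt x1|)%N by apply: hmax.
by apply: piece_dense hy _; apply/eqP; rewrite eq_sym eqEcard sxy hle.
Qed.

Lemma pieces_partition :
  [/\ forall k : 'I_n, exists a, piece k a,
      forall (k k' : 'I_n) a, piece k a -> piece k' a -> k = k',
      forall a, A a <-> exists k : 'I_n, piece k a,
      forall k : 'I_n, precell G (upd N j M) (piece k) &
      forall (k : 'I_n) x, ofrontier G (piece k) x <-> ofrontier G A x].
Proof.
have [p0 e0 _] := inF_Some (hI ha0) jI.
have cp0 : zcongr p0 (one *+ r0) (N j) by move: cr0; rewrite e0.
have Nj0 : (0 < N j)%N by apply: leq_ltn_trans hr0.
split.
- by move=> k; have [a [ha _ ca]] := piece_liftable k ha0; exists a.
- move=> k k' a [ha ca] [_ ca']; have [p ep _] := inF_Some (hI ha) jI; rewrite ep in ca ca'.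
  have := zcongr_nat_inj (piece_class_lt k) (piece_class_lt k')
    (zcongr_trans p (zcongr_sym ca) ca').
  by move/eqP; rewrite eqn_add2l eqn_pmul2r // => /eqP /val_inj.
- move=> a; split=> [ha | [k []] //]; have [p ep _] := inF_Some (hI ha) jI.
  have hp := precell_congr hpre ha ha0 ep e0.
  have [k kn ck] := zcongr_refine hn (zcongr_trans p0 hp cp0).
  by exists (Ordinal kn); split => //; rewrite ep.
- move=> k; apply: precell_restr hpre _ (piece_class_lt k) (piece_liftable k).
  exact: dvdn_mull.
- by move=> k; apply: ofrontier_eq hI _ (frontier_in_piece k) => a [].
Qed.

End Pieces.

Unset Implicit Arguments.

Theorem proposition5p5 (Q : lmodType rat) (G : zgroup Q) (m : nat)
    (N : 'I_m -> nat) (I : {set 'I_m}) (A : ('I_m -> Omega Q) -> Prop) :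
  (forall i, 0 < N i)%N ->
  (forall a, A a -> inF G I a) ->
  precell G N A ->
  monohedral G A ->
  ~ oclosed G A ->
  forall n : nat, (1 <= n)%N ->
  exists N' : 'I_m -> nat, (forall i, 0 < N' i)%N /\
    exists P : 'I_n -> ('I_m -> Omega Q) -> Prop,
      (forall i, exists a, P i a) /\
      (forall i j a, P i a -> P j a -> i = j) /\
      (forall a, A a <-> exists i, P i a) /\
      (forall i, precell G N' (P i)) /\
      (forall i x, ofrontier G (P i) x <-> ofrontier G A x).
Proof.
move=> hN hI hpre hmono hnc n hn.
have [x1 [hx1 nx1 hmax]] := max_frontier_point hnc.
have [j [jI xj hbelow]] := first_missing_coord hI hx1 nx1.
have [a0 [ha0 _]] := hx1 _ (unit_box_in x1).
have [p0 e0 hp0] := inF_Some (hI a0 ha0) jI.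
have [r0 [hr0 cr0]] := zcongr_nat_rep (hN j) hp0.
have ca0 : congr G (a0 j) r0 (N j) by rewrite e0.
exists (upd N j (n * N j)); split.
  by move=> i; rewrite /upd; case: eqP => // _; rewrite muln_gt0 hn hN.
exists (fun k : 'I_n => restr (G := G) A j (r0 + k * N j) (n * N j)).
have [hne hdisj hcov hpc hfr] :=
  pieces_partition hI hpre hmono hx1 hmax jI xj hbelow ha0 ca0 hr0 hn.
by split; [|split; [|split; [|split]]].
Qed.
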